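(* Let $w\in RH_1$ and for $n\in\mathbb{N}$ define $$w_n(t)=\begin{cases}\frac1n,& w(t)\le\frac1n,\\ w(t),&\frac1n\le w(t)\le n,\\ n,& w(t)\ge n.\end{cases}$$ Then $[w_n]_{RH_1}\le[w]_{RH_1}$. Moreover, for every $w\in A_\infty$ the same truncation satisfies $[w_n]_{A_\infty}\le[w]_{A_\infty}$.
   Context: Weights are locally integrable, a.e. positive functions on $\mathbb{R}$; $\langle f\rangle_J=\frac1{|J|}\int_J f$. $[w]_{RH_1}=\sup_J\Big\langle \frac{w}{\langle w\rangle_J}\log\frac{w}{\langle w\rangle_J}\Big\rangle_J$ and $[w]_{A_\infty}=\sup_J\langle w\rangle_Je^{-\langle\log w\rangle_J}$, suprema over intervals $J\subset\mathbb{R}$; $w\in RH_1$ (resp. $A_\infty$) iff the corresponding constant is finite. *)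

From HB Require Import structures.
From mathcomp Require Import all_boot all_order all_algebra.
From mathcomp Require Import all_classical all_reals all_analysis.
Set Implicit Arguments. Unset Strict Implicit. Unset Printing Implicit Defensive.
Import Order.TTheory GRing.Theory Num.Theory.
Local Open Scope classical_set_scope.
Local Open Scope ring_scope.

Section weights.
Context {R : realType}.
Local Notation mu := (@lebesgue_measure R).

Definition weight (w : R -> R) : Prop :=
  locally_integrable setT w /\ {ae mu, forall x, 0 < w x}.

Definition avg (f : R -> R) (a b : R) : \bar R :=
  ((b - a)^-1)%:E * \int[mu]_(x in `[a, b]) (f x)%:E.

(* < (w/<w>_J) log (w/<w>_J) >_J  (ln is the natural logarithm; the
   integrand is bounded below by -1/e, so the average is well defined in \bar R) *)
Definition rh1_avg (w : R -> R) (a b : R) : \bar R :=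
  let c := fine (avg w a b) in
  avg (fun x => (w x / c) * ln (w x / c)) a b.

(* <w>_J * exp(- <log w>_J), with exp(+oo) = +oo. *)
Definition ainf_avg (w : R -> R) (a b : R) : \bar R :=
  (avg w a b * expeR (- avg (fun x => ln (w x)) a b))%E.

Definition RH1_const (w : R -> R) : \bar R :=
  ereal_sup [set r | exists a b : R, a < b /\ r = rh1_avg w a b].

Definition Ainf_const (w : R -> R) : \bar R :=
  ereal_sup [set r | exists a b : R, a < b /\ r = ainf_avg w a b].

Definition trunc (n : nat) (w : R -> R) (t : R) : R :=
  Num.min (Num.max (w t) (n%:R)^-1) n%:R.

End weights.

From HB Require Import structures.
From mathcomp Require Import all_boot all_order all_algebra.
From mathcomp Require Import all_classical all_reals all_analysis.
From mathcomp Require Import measurable_realfun lebesgue_Rintegral.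
From mathcomp Require Import ring lra.
Import Order.TTheory GRing.Theory Num.Theory.
Local Open Scope classical_set_scope.
Local Open Scope ring_scope.

(** Fix an interval [J] and an everywhere positive weight [p] (an a.e. positive
    weight may be redefined on a null set), and let [v] be its truncation at the
    levels [s = 1/n] and [N = n], with averages [m = <v>_J] and [M = <p>_J].
    Then [s <= m <= N], and truncation moves [p] towards every level [t] in
    [[s, N]]: [(p - v) (v - t) >= 0] pointwise.
    - With [t = m] this gives [p m / v <= p - v + m]; inserting it into
      [ln x <= x - 1] at [x = p m / (v M)] and averaging yields
      [<ln p>_J - <ln v>_J <= ln M - ln m], which is the A_infinity inequality
      on [J].
    - For RH_1 let [c = <(v/m) ln (v/m)>_J]; then [ln (s/m) <= c <= ln (N/m)],
      so the level [t = m e^c] gives [(p - v) (ln (v/m) - c) >= 0]. Combined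
      with the tangent inequality for [x ln x] at [v/m], evaluated at [p/M],
      averaging yields [c <= <(p/M) ln (p/M)>_J]. *)

Set Implicit Arguments. Unset Strict Implicit.

Section integral_order.
Context d (T : measurableType d) (R : realType).
Variable mu : {measure set T -> \bar R}.

Lemma aeS (P Q : T -> Prop) : (forall x, P x -> Q x) ->
  {ae mu, forall x, P x} -> {ae mu, forall x, Q x}.
Proof.
move=> PQ [N [mN N0 PN]]; exists N; split => // x /= nQx.
by apply: PN => /= Px; exact/nQx/PQ.
Qed.

Lemma le_measurable_integral (D : set T) (f g : T -> \bar R) : measurable D ->
  measurable_fun D f -> measurable_fun D g -> {in D, forall x, f x <= g x}%E ->
  (\int[mu]_(x in D) f x <= \int[mu]_(x in D) g x)%E.
Proof.
move=> mD mf mg fg; rewrite integralE [leRHS]integralE leeB//.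
- apply: ge0_le_integral => //; [exact: measurable_funepos..|].
  by move=> x /mem_set; exact: funepos_le.
- apply: ge0_le_integral => //; [exact: measurable_funeneg..|].
  by move=> x /mem_set; exact: funeneg_le.
Qed.

Lemma integral_gt0 (D : set T) (f : T -> R) : measurable D -> (0 < mu D)%E ->
  measurable_fun D f -> (forall x, D x -> 0 < f x) ->
  (0 < \int[mu]_(x in D) (f x)%:E)%E.
Proof.
move=> mD muD0 mf f0; rewrite lt_neqAle integral_ge0 ?andbT; last first.
  by move=> x Dx; rewrite lee_fin ltW// f0.
apply/eqP => /esym int0.
have mEf : measurable_fun D (EFin \o f) by exact/measurable_EFinP.
have [|N [mN N0 DN]] := (ae_eq_integral_abs mu mD mEf).1.
  rewrite -int0; apply: eq_integral => x /[!inE] Dx /=.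
  by rewrite gtr0_norm// f0.
suff : (mu D <= mu N)%E by rewrite N0 leNgt muD0.
apply: le_measure; rewrite ?inE// => x Dx; apply: DN => /(_ Dx) /= /eqP.
by rewrite eqe gt_eqF// f0.
Qed.

End integral_order.

Section pointwise.
Context {R : realType}.

Lemma ln_le_subr1 (x : R) : 0 < x -> ln x <= x - 1.
Proof.
move=> x0; have := @le_ln1Dx R (x - 1).
by rewrite addrCA subrr addr0; apply; lra.
Qed.

(* The left-hand side is the tangent line of [x ln x] at [b], evaluated at [a]. *)
Lemma xlnx_ge_tangent (a b : R) :
  0 < a -> 0 < b -> a * ln b + (a - b) <= a * ln a.
Proof.
move=> a0 b0; have := ln_le_subr1 (divr_gt0 b0 a0).
rewrite ln_div ?posrE// -(ler_pM2l a0) mulrBr [a * (_ - 1)]mulrBr.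
by rewrite mulrCA divff ?gt_eqF//; lra.
Qed.

Lemma clamp_bounds (s N p : R) : s <= N -> s <= Num.min (Num.max p s) N <= N.
Proof. by move=> sN; rewrite le_min le_max lexx orbT sN ge_min lexx orbT. Qed.

(* Clamping [p] to [s, N] moves it towards every level of [f] between [f s]
   and [f N]. *)
Lemma clamp_sign (f : R -> R) (s N p c : R) : s <= N -> f s <= c <= f N ->
  0 <= (p - Num.min (Num.max p s) N) * (f (Num.min (Num.max p s) N) - c).
Proof.
move=> sN /andP[fsc cfN]; have [ps|sp] := ltP p s.
  by rewrite min_l//; apply: mulr_le0; rewrite subr_le0// ltW.
have [Np|pN] := ltP N p.
  by apply: mulr_ge0; rewrite subr_ge0// ltW.
by rewrite subrr mul0r.
Qed.

Lemma ainf_pointwise_bound (p v m M : R) :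
  0 < p -> 0 < v -> 0 < m -> 0 < M -> 0 <= (p - v) * (v - m) ->
  ln p <= ln v + (p - v) / M + (m / M - 1 + (ln M - ln m)).
Proof.
move=> p0 v0 m0 M0 pvm.
have := ln_le_subr1 (divr_gt0 (mulr_gt0 p0 m0) (mulr_gt0 v0 M0)).
rewrite ln_div ?posrE ?mulr_gt0// !lnM ?posrE//.
suff : p * m / (v * M) <= (p - v) / M + m / M by lra.
rewrite invfM mulrA -mulrDl ler_pM2r ?invr_gt0// ler_pdivrMr//; nra.
Qed.

Lemma rh1_pointwise_bound (p v m M c : R) :
  0 < p -> 0 < v -> 0 < m -> 0 < M -> 0 <= (p - v) * (ln (v / m) - c) ->
  v / m * ln (v / m) * (m / M) + (p - v) * (c / M) + (p / M - v / m) <=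
  p / M * ln (p / M).
Proof.
move=> p0 v0 m0 M0 pvc.
apply: le_trans (xlnx_ge_tangent (divr_gt0 p0 M0) (divr_gt0 v0 m0)).
rewrite lerD2r -subr_ge0.
have -> : p / M * ln (v / m) -
          (v / m * ln (v / m) * (m / M) + (p - v) * (c / M)) =
          (p - v) * (ln (v / m) - c) / M by field; rewrite !gt_eqF.
by rewrite divr_ge0// ltW.
Qed.

End pointwise.

Section interval_average.
Context {R : realType}.
Local Notation mu := (@lebesgue_measure R).
Variables a b : R.

Definition ravg (f : R -> R) : R := (b - a)^-1 * \int[mu]_(x in `[a, b]) f x.

Hypothesis ab : a < b.
Local Notation integrableJ f := (mu.-integrable `[a, b] (EFin \o f)).

Let muJ : mu `[a, b] = (b - a)%:E.
Proof. by rewrite lebesgue_measure_itv /= lte_fin ab EFinB. Qed.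

Lemma bounded_integrable (f : R -> R) (C : R) : measurable_fun `[a, b] f ->
  {in `[a, b], forall x, `|f x| <= C} -> integrableJ f.
Proof.
move=> mf fC; apply: measurable_bounded_integrable => //.
  by change (mu `[a, b] < +oo)%E; rewrite muJ ltry.
exists C; split; first by rewrite num_real.
by move=> M CM x Jx; exact: le_trans (fC x Jx) (ltW CM).
Qed.

Lemma integrableJ_cst (k : R) : integrableJ (fun=> k).
Proof. by apply: (@bounded_integrable _ `|k|) => //; exact: measurable_cst. Qed.

Lemma integrableJD (f g : R -> R) : integrableJ f -> integrableJ g ->
  integrableJ (fun x => f x + g x).
Proof.
by move=> fi gi; apply: (eq_integrable _ _ _ _ (integrableD _ fi gi)).
Qed.

Lemma integrableJB (f g : R -> R) : integrableJ f -> integrableJ g ->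
  integrableJ (fun x => f x - g x).
Proof.
by move=> fi gi; apply: (eq_integrable _ _ _ _ (integrableB _ fi gi)).
Qed.

Lemma integrableJZr (f : R -> R) (k : R) :
  integrableJ f -> integrableJ (fun x => f x * k).
Proof. by move=> fi; apply: (eq_integrable _ _ _ _ (integrableZr _ k fi)). Qed.

Lemma avgE (f : R -> R) : integrableJ f -> avg f a b = (ravg f)%:E.
Proof.
move=> fi; rewrite /avg /ravg EFinM /Rintegral fineK//.
by apply: (integrable_fin_num _ fi); exact: measurable_itv.
Qed.

Lemma ravg_cst (k : R) : ravg (fun=> k) = k.
Proof.
rewrite /ravg Rintegral_cst// (_ : fine _ = fine (b - a)%:E).
  by rewrite /= mulrCA mulVf ?mulr1// subr_eq0 gt_eqF.
by congr fine; exact: muJ.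
Qed.

Lemma ravgD (f g : R -> R) : integrableJ f -> integrableJ g ->
  ravg (fun x => f x + g x) = ravg f + ravg g.
Proof. by move=> fi gi; rewrite /ravg RintegralD// mulrDr. Qed.

Lemma ravgB (f g : R -> R) : integrableJ f -> integrableJ g ->
  ravg (fun x => f x - g x) = ravg f - ravg g.
Proof. by move=> fi gi; rewrite /ravg RintegralB// mulrBr. Qed.

Lemma ravgZr (f : R -> R) (k : R) :
  integrableJ f -> ravg (fun x => f x * k) = ravg f * k.
Proof. by move=> fi; rewrite /ravg RintegralZr// mulrA. Qed.

Lemma ravg_le (f g : R -> R) : integrableJ f -> integrableJ g ->
  {in `[a, b], forall x, f x <= g x} -> ravg f <= ravg g.
Proof.
by move=> fi gi fg; rewrite ler_pM2l ?invr_gt0 ?subr_gt0// le_Rintegral.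
Qed.

Lemma ravg_gt0 (f : R -> R) :
  integrableJ f -> {in `[a, b], forall x, 0 < f x} -> 0 < ravg f.
Proof.
move=> fi f0; rewrite /ravg mulr_gt0 ?invr_gt0 ?subr_gt0// /Rintegral.
have ffin : (\int[mu]_(x in `[a, b]) (f x)%:E)%E \is a fin_num.
  by apply: (integrable_fin_num _ fi); exact: measurable_itv.
have muJ0 : (0 < mu `[a, b])%E by rewrite muJ lte_fin subr_gt0.
have := integral_gt0 _ muJ0 _ f0; rewrite -(fineK ffin) lte_fin; apply.
- exact: measurable_itv.
- by apply/measurable_EFinP; exact: measurable_int fi.
Qed.

Lemma avg_le_ravg (f g : R -> R) : measurable_fun `[a, b] f -> integrableJ g ->
  {in `[a, b], forall x, f x <= g x} -> (avg f a b <= (ravg g)%:E)%E.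
Proof.
move=> mf gi fg; rewrite -avgE//; apply: lee_wpmul2l.
  by rewrite lee_fin invr_ge0 ltW// subr_gt0.
apply: le_measurable_integral.
- exact: measurable_itv.
- exact/measurable_EFinP.
- exact: measurable_int gi.
- by move=> x /[!inE] Jx; rewrite lee_fin fg.
Qed.

Lemma ravg_le_avg (f g : R -> R) : integrableJ f -> measurable_fun `[a, b] g ->
  {in `[a, b], forall x, f x <= g x} -> ((ravg f)%:E <= avg g a b)%E.
Proof.
move=> fi mg fg; rewrite -avgE//; apply: lee_wpmul2l.
  by rewrite lee_fin invr_ge0 ltW// subr_gt0.
apply: le_measurable_integral.
- exact: measurable_itv.
- exact: measurable_int fi.
- exact/measurable_EFinP.
- by move=> x /[!inE] Jx; rewrite lee_fin fg.
Qed.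

End interval_average.

Section positive_representative.
Context {R : realType}.
Local Notation mu := (@lebesgue_measure R).

(* An a.e. positive weight agrees a.e. with this everywhere positive one. *)
Definition posify (w : R -> R) (x : R) : R := if 0 < w x then w x else 1.

Lemma posify_gt0 (w : R -> R) (x : R) : 0 < posify w x.
Proof. by rewrite /posify; case: ifP. Qed.

Lemma measurable_posify (w : R -> R) :
  measurable_fun setT w -> measurable_fun setT (posify w).
Proof.
by move=> mw; apply: measurable_fun_ifT => //; exact: measurable_fun_ltr.
Qed.

Lemma measurable_trunc (n : nat) (w : R -> R) :
  measurable_fun setT w -> measurable_fun setT (trunc n w).
Proof. by move=> mw; apply: measurable_minr => //; exact: measurable_maxr. Qed.

Lemma posify_ae (w : R -> R) : {ae mu, forall x, 0 < w x} ->
  {ae mu, forall x, w x = posify w x}.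
Proof. by apply: aeS => x wx; rewrite /posify wx. Qed.

Lemma trunc_posify_ae (n : nat) (w : R -> R) : {ae mu, forall x, 0 < w x} ->
  {ae mu, forall x, trunc n w x = trunc n (posify w) x}.
Proof. by move=> /posify_ae; apply: aeS => x wx; rewrite /trunc wx. Qed.

Lemma eq_ae_avg (a b : R) (f g : R -> R) :
  measurable_fun setT f -> measurable_fun setT g ->
  {ae mu, forall x, f x = g x} -> avg f a b = avg g a b.
Proof.
move=> mf mg fg; rewrite /avg; congr (_ * _)%E; apply: ae_eq_integral.
- exact: measurable_itv.
- by apply/measurable_EFinP; exact: measurable_funTS.
- by apply/measurable_EFinP; exact: measurable_funTS.
- by apply: aeS fg => x /= ->.
Qed.

Lemma eq_ae_rh1_avg (a b : R) (f g : R -> R) :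
  measurable_fun setT f -> measurable_fun setT g ->
  {ae mu, forall x, f x = g x} -> rh1_avg f a b = rh1_avg g a b.
Proof.
move=> mf mg fg; rewrite /rh1_avg (eq_ae_avg a b mf mg fg).
set c := fine _; have mxlnx (h : R -> R) : measurable_fun setT h ->
    measurable_fun setT (fun x => h x / c * ln (h x / c)).
  move=> mh; apply: measurable_funM; first exact: measurable_funM.
  by apply: measurableT_comp; [exact: measurable_ln | exact: measurable_funM].
by apply: eq_ae_avg; [exact: mxlnx | exact: mxlnx | apply: aeS fg => x ->].
Qed.

Lemma eq_ae_ainf_avg (a b : R) (f g : R -> R) :
  measurable_fun setT f -> measurable_fun setT g ->
  {ae mu, forall x, f x = g x} -> ainf_avg f a b = ainf_avg g a b.
Proof.
move=> mf mg fg; rewrite /ainf_avg (eq_ae_avg a b mf mg fg).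
rewrite (@eq_ae_avg a b (fun x => ln (f x)) (fun x => ln (g x)))//;
  [exact: measurableT_comp .. |].
by apply: aeS fg => x ->.
Qed.

Lemma weight_integrable_posify (w : R -> R) (a b : R) : a < b -> weight w ->
  mu.-integrable `[a, b] (EFin \o posify w).
Proof.
move=> ab [[mw _ wloc] _].
have iw : mu.-integrable `[a, b] (EFin \o w).
  apply/integrableP; split.
    by apply/measurable_EFinP; exact: measurable_funTS.
  exact: wloc (@subsetT _ _) (@segment_compact _ a b).
have inw : mu.-integrable `[a, b] (EFin \o (fun x => `|w x| + 1)).
  exact: integrableJD (integrable_norm iw) (integrableJ_cst ab 1).
apply: le_integrable inw.
- exact: measurable_itv.
- by apply/measurable_EFinP; apply: measurable_funTS; exact: measurable_posify.
- move=> x _ /=; rewrite lee_fin [leRHS]ger0_norm ?addr_ge0// /posify.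
  by case: ifP => [w0|_]; rewrite ?normr1 ?lerDl ?lerDr.
Qed.

End positive_representative.

Section truncation.
Context {R : realType}.
Local Notation mu := (@lebesgue_measure R).
Variables (a b : R) (n : nat) (p : R -> R).
Hypotheses (ab : a < b) (n_gt0 : (0 < n)%N) (mp : measurable_fun setT p)
  (p_gt0 : forall x, 0 < p x) (ip : mu.-integrable `[a, b] (EFin \o p)).
Local Notation integrableJ f := (mu.-integrable `[a, b] (EFin \o f)).
Local Notation v := (trunc n p).

Let N : R := n%:R.
Let s : R := N^-1.
Let m : R := ravg a b v.
Let M : R := ravg a b p.

Let N_gt0 : 0 < N. Proof. by rewrite ltr0n. Qed.

Let s_gt0 : 0 < s. Proof. by rewrite invr_gt0. Qed.

Let s_le_N : s <= N.
Proof. by rewrite (@le_trans _ _ 1) ?invf_le1 ?ler1n. Qed.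

Let v_bounds x : s <= v x <= N. Proof. exact: clamp_bounds. Qed.

Let v_gt0 x : 0 < v x.
Proof. by case/andP: (v_bounds x) => sv _; exact: lt_le_trans sv. Qed.

Let mv : measurable_fun setT v. Proof. exact: measurable_trunc. Qed.

Let iv : integrableJ v.
Proof.
apply: (bounded_integrable ab (C := N)); first exact: measurable_funTS.
by move=> x _; case/andP: (v_bounds x) => _; rewrite ger0_norm// ltW.
Qed.

Let m_bounds : s <= m <= N.
Proof.
rewrite -{1}(ravg_cst ab s) -(ravg_cst ab N) !ravg_le ?integrableJ_cst//.
- by move=> x _; case/andP: (v_bounds x).
- by move=> x _; case/andP: (v_bounds x).
Qed.

Let m_gt0 : 0 < m.
Proof. by case/andP: m_bounds => sm _; exact: lt_le_trans sm. Qed.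

Let M_gt0 : 0 < M. Proof. exact: ravg_gt0. Qed.

Let ln_v_bound x : `|ln (v x)| <= ln N.
Proof.
have [sv vN] := andP (v_bounds x).
by rewrite ler_norml -lnV ?posrE// -/s !ler_ln ?posrE// sv vN.
Qed.

Let ilv : integrableJ (fun x => ln (v x)).
Proof.
apply: (bounded_integrable ab (C := ln N)) => [|x _]; last exact: ln_v_bound.
by apply: measurable_funTS; exact: measurableT_comp.
Qed.

Lemma ainf_avg_trunc_le : (ainf_avg v a b <= ainf_avg p a b)%E.
Proof.
pose K := m / M - 1 + (ln M - ln m).
have lnp_le x : ln (p x) <= ln (v x) + (p x - v x) / M + K.
  apply: ainf_pointwise_bound => //.
  exact: (@clamp_sign _ (fun y => y) _ _ (p x) _ s_le_N m_bounds).
have ipv : integrableJ (fun x => (p x - v x) / M).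
  exact: integrableJZr (integrableJB ip iv).
have avg_G : ravg a b (fun x => ln (v x) + (p x - v x) / M + K) =
             ravg a b (fun x => ln (v x)) + (ln M - ln m).
  rewrite (ravgD (integrableJD ilv ipv) (integrableJ_cst ab K)) ravg_cst//.
  rewrite (ravgD ilv ipv) (ravgZr _ (integrableJB ip iv)) (ravgB ip iv).
  rewrite -/m -/M /K.
  by field; rewrite gt_eqF.
have avg_lnp : (avg (fun x => ln (p x)) a b <=
                (ravg a b (fun x => ln (v x)) + (ln M - ln m))%:E)%E.
  rewrite -avg_G; apply: (avg_le_ravg ab) => [||x _]; last exact: lnp_le.
  - by apply: measurable_funTS; exact: measurableT_comp.
  - exact: integrableJD (integrableJD ilv ipv) (integrableJ_cst ab K).
rewrite /ainf_avg (avgE iv) (avgE ilv) (avgE ip) -/m -/M.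
have exp_le : (expeR (- (ravg a b (fun x => ln (v x)) + (ln M - ln m))%:E) <=
               expeR (- avg (fun x => ln (p x)) a b))%E.
  by rewrite lee_expeR leeN2.
have M_ge0 : (0 <= M%:E)%E by rewrite lee_fin ltW.
apply: le_trans; last exact: lee_wpmul2l M_ge0 _ _ exp_le.
rewrite -!EFinN /= -!EFinM lee_fin opprD expRD opprB expRB !lnK ?posrE// mulrCA.
by rewrite [M * (m / M)]mulrC divfK ?gt_eqF// mulrC lexx.
Qed.

Let fv x : R := v x / m * ln (v x / m).
Let c : R := ravg a b fv.

Let ln_v_div_bounds x : ln (s / m) <= ln (v x / m) <= ln (N / m).
Proof.
have [sv vN] := andP (v_bounds x).
by rewrite !ler_ln ?posrE ?divr_gt0// !ler_pM2r ?invr_gt0// sv vN.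
Qed.

Let mfv : measurable_fun setT fv.
Proof.
apply: measurable_funM; first exact: measurable_funM.
by apply: measurableT_comp; [exact: measurable_ln | exact: measurable_funM].
Qed.

Let ifv : integrableJ fv.
Proof.
apply: (bounded_integrable ab (C := N / m * (ln N + `|ln m|))) => [|x _].
  exact: measurable_funTS.
have [_ vN] := andP (v_bounds x).
rewrite normrM ler_pM//.
  rewrite ger0_norm ?ler_pM2r ?invr_gt0//.
  exact: divr_ge0 (ltW (v_gt0 x)) (ltW m_gt0).
rewrite ln_div ?posrE//; apply: le_trans (ler_normB _ _) _.
by rewrite lerD2r ln_v_bound.
Qed.

Let c_bounds : ln (s / m) <= c <= ln (N / m).
Proof.
have ravg_scaled t : ravg a b (fun x => v x * (m^-1 * t)) = t.
  by rewrite (ravgZr _ iv) -/m mulVKf ?gt_eqF.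
have fvE x : fv x = v x * (m^-1 * ln (v x / m)) by rewrite /fv mulrA.
apply/andP; split.
  rewrite -[leLHS]ravg_scaled; apply: ravg_le => // [|x _].
    exact: integrableJZr.
  by rewrite fvE !ler_pM2l ?v_gt0 ?invr_gt0//; case/andP: (ln_v_div_bounds x).
rewrite -[leRHS]ravg_scaled; apply: ravg_le => // [|x _].
  exact: integrableJZr.
by rewrite fvE !ler_pM2l ?v_gt0 ?invr_gt0//; case/andP: (ln_v_div_bounds x).
Qed.

Lemma rh1_avg_trunc_le : (rh1_avg v a b <= rh1_avg p a b)%E.
Proof.
have fp_ge x : fv x * (m / M) + (p x - v x) * (c / M) + (p x / M - v x / m) <=
               p x / M * ln (p x / M).
  apply: rh1_pointwise_bound => //.
  exact: (@clamp_sign _ (fun y => ln (y / m)) _ _ (p x) _ s_le_N c_bounds).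
have ifvZ := integrableJZr (m / M) ifv.
have ipvZ := integrableJZr (c / M) (integrableJB ip iv).
have ipZ := integrableJZr M^-1 ip; have ivZ := integrableJZr m^-1 iv.
have avg_h : ravg a b (fun x =>
    fv x * (m / M) + (p x - v x) * (c / M) + (p x / M - v x / m)) = c.
  rewrite (ravgD (integrableJD ifvZ ipvZ) (integrableJB ipZ ivZ)).
  rewrite (ravgD ifvZ ipvZ) (ravgB ipZ ivZ) (ravgZr _ ifv).
  rewrite (ravgZr _ (integrableJB ip iv)) (ravgZr _ ip) (ravgZr _ iv).
  rewrite (ravgB ip iv) -/m -/M -/c.
  by field; rewrite !gt_eqF.
rewrite /rh1_avg (avgE iv) (avgE ip) -/m -/M /= (avgE ifv) -/c -avg_h.
apply: (ravg_le_avg ab) => [||x _]; last exact: fp_ge.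
- exact: integrableJD (integrableJD ifvZ ipvZ) (integrableJB ipZ ivZ).
- apply: measurable_funTS; apply: measurable_funM; first exact: measurable_funM.
  by apply: measurableT_comp; [exact: measurable_ln | exact: measurable_funM].
Qed.

End truncation.

Lemma ereal_sup_itv_le {R : realType} (F G : R -> R -> \bar R) :
  (forall a b, a < b -> (F a b <= G a b)%E) ->
  (ereal_sup [set r | exists a b : R, (a < b)%R /\ r = F a b] <=
   ereal_sup [set r | exists a b : R, (a < b)%R /\ r = G a b])%E.
Proof.
move=> FG; apply: ge_ereal_sup => _ [a [b [ab ->]]].
by apply: le_trans (FG a b ab) (ereal_sup_ubound _); exists a, b.
Qed.

Unset Implicit Arguments. Set Strict Implicit.

Theorem lemma1 (R : realType) :
  (forall (w : R -> R) (n : nat), weight w -> (RH1_const w < +oo)%E ->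
     (0 < n)%N -> (RH1_const (trunc n w) <= RH1_const w)%E) /\
  (forall (w : R -> R) (n : nat), weight w -> (Ainf_const w < +oo)%E ->
     (0 < n)%N -> (Ainf_const (trunc n w) <= Ainf_const w)%E).
Proof.
(* The inequality holds interval by interval. *)
split=> w n ww _ n_gt0; have [[mw _ _] w_gt0] := ww;
  apply: ereal_sup_itv_le => a b ab;
  have ip := weight_integrable_posify ab ww; have mp := measurable_posify mw;
  have eq_trunc := trunc_posify_ae n w_gt0;
  have [mt mtp] := (measurable_trunc n mw, measurable_trunc n mp).
- rewrite (eq_ae_rh1_avg _ _ mt mtp eq_trunc).
  rewrite (eq_ae_rh1_avg _ _ mw mp (posify_ae w_gt0)).
  by apply: rh1_avg_trunc_le => //; exact: posify_gt0.
- rewrite (eq_ae_ainf_avg _ _ mt mtp eq_trunc).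
  rewrite (eq_ae_ainf_avg _ _ mw mp (posify_ae w_gt0)).
  by apply: ainf_avg_trunc_le => //; exact: posify_gt0.
Qed.
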